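(* For every integer $k\ge1$, the monomials $u^iv^jw^{2k-i-j}$ occurring with nonzero coefficient in $P_{k/(k+1)}(u,v,w)$ are exactly those with $(i,j)\in\mathbb{Z}^2$, $i,j\ge0$, $\frac{i}{k}+\frac{j}{k+1}\ge1$ and $i+j\le 2k$.
   Context: Markov polynomials. Let $x,y,z$ be indeterminates. Consider the set consisting of all rationals $\rho\in[0,1]$, each written in lowest terms $\rho=a/b$ with integers $a\ge 0$, $b\ge 1$, together with the formal symbol $1/0$. Define Laurent polynomials $M_\rho(x,y,z)$ recursively by $M_{1/0}=y$, $M_{0/1}=x$, $M_{1/1}=\frac{x^2+y^2}{z}$, and: whenever $a/b$, $c/d$ are in this set with $|ad-bc|=1$ and $(a+2c)/(b+2d)\in[0,1]$, then $M_{\frac{a+2c}{b+2d}}=\big(M_{c/d}^2+M_{\frac{a+c}{b+d}}^2\big)/M_{a/b}$. This determines $M_\rho$ for every rational $\rho\in[0,1]$. Numerator. For coprime $1\le a\le b$, $P_{a/b}(u,v,w)$ denotes the homogeneous polynomial of degree $a+b-1$ such that $M_{a/b}(x,y,z)=P_{a/b}(x^2,y^2,z^2)/(x^{a-1}y^{b-1}z^{a+b-1})$; its existence is known. *)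

(* Markov polynomials as elements of the fraction field of
   Z[x,y,z] (multinomials' {mpoly int[3]}), which contains the Laurent
   polynomials in x, y, z. *)
From HB Require Import structures.
From mathcomp Require Import all_boot all_order all_algebra.
From mathcomp Require Import fraction.
From mathcomp Require Import mpoly.
Set Implicit Arguments. Unset Strict Implicit. Unset Printing Implicit Defensive.
Import Order.TTheory GRing.Theory Num.Theory.

Local Open Scope ring_scope.

Definition Poly3 := {mpoly int[3]}.
Definition Frac3 := {fraction Poly3}.

Definition i0 : 'I_3 := @Ordinal 3 0 isT.
Definition i1 : 'I_3 := @Ordinal 3 1 isT.
Definition i2 : 'I_3 := @Ordinal 3 2 isT.

Definition xF : Frac3 := tofrac ('X_i0 : Poly3).
Definition yF : Frac3 := tofrac ('X_i1 : Poly3).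
Definition zF : Frac3 := tofrac ('X_i2 : Poly3).

(* A rational a/b in [0,1] in lowest terms (a >= 0, b >= 1), or the formal
   symbol 1/0, represented by the pair (a, b). *)
Definition in_markov_set (a b : nat) : bool :=
  ((0 < b)%N && (a <= b)%N && coprime a b) || ((a == 1%N) && (b == 0%N)).

Definition farey_nbrs (a b c d : nat) : bool :=
  (a * d == b * c + 1)%N || (b * c == a * d + 1)%N.

(* M : nat -> nat -> Frac3, M a b standing for M_{a/b}, satisfies the
   recursive definition of the Markov polynomials. *)
Definition markov_family (M : nat -> nat -> Frac3) : Prop :=
  [/\ M 1%N 0%N = yF,
      M 0%N 1%N = xF,
      M 1%N 1%N = (xF ^+ 2 + yF ^+ 2) / zF &
      forall a b c d : nat,
        in_markov_set a b -> in_markov_set c d -> farey_nbrs a b c d ->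
        (a + 2 * c <= b + 2 * d)%N ->
        M (a + 2 * c)%N (b + 2 * d)%N
          = (M c d ^+ 2 + M (a + c)%N (b + d)%N ^+ 2) / M a b].

Definition subst_squares (P : Poly3) : Poly3 :=
  P \mPo [tuple ('X_i : Poly3) ^+ 2 | i < 3].

From mathcomp Require Import all_boot all_order all_algebra.
From mathcomp Require Import fraction.
From mathcomp Require Import mpoly.
From mathcomp Require Import zify ring.
Import Order.TTheory GRing.Theory Num.Theory.
Local Open Scope ring_scope.

(* Along the Farey chain k/(k+1), the exchange relation with 1/1 reads
   M_{(k+2)/(k+3)} M_{k/(k+1)} = M_{1/1}^2 + M_{(k+1)/(k+2)}^2.  It is solved by
   M_{k/(k+1)} = x p_k(x^2,y^2,z^2) / (x y z^2)^k, where
   p_{k+1} = (u+v)^2 (p_k + q_k) + u w p_k  and  q_{k+1} = v w (p_k + q_k):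
   the relation amounts to the Cassini identity
   p_{k+2} p_k - p_{k+1}^2 = (u+v)^2 (u v w^2)^k v w, which holds because p_k
   satisfies a three-term linear recurrence.  Hence P = p_k.  As this recursion has
   nonnegative coefficients, no cancellation occurs and the supports of p_k and q_k
   are computed by induction as explicit lattice regions; that of p_k is the region
   in the statement. *)

Section NonnegSupport.
Variables (n : nat) (R : numDomainType).
Implicit Types (p q : {mpoly R[n]}) (e m : 'X_{1..n}).

Definition nonneg_coeffs p := forall m, 0 <= p@_m.

Lemma mcoeffMX_if p e m :
  (p * 'X_[e])@_m = if (e <= m)%MM then p@_(m - e) else 0.
Proof.
case: ifP => [le_em|nle_em]; first by rewrite -{1}(submK le_em) addmC mcoeffMX.
apply/eqP; rewrite mcoeff_eq0; apply/negP; rewrite (perm_mem (msuppMX p e)).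
by case/mapP => m' _ def_m; rewrite def_m lem_addr in nle_em.
Qed.

Lemma nonneg_coeffsD p q :
  nonneg_coeffs p -> nonneg_coeffs q -> nonneg_coeffs (p + q).
Proof. by move=> p_ge0 q_ge0 m; rewrite mcoeffD addr_ge0. Qed.

Lemma nonneg_coeffsMX p e : nonneg_coeffs p -> nonneg_coeffs (p * 'X_[e]).
Proof. by move=> p_ge0 m; rewrite mcoeffMX_if; case: ifP. Qed.

Lemma mcoeffD_neq0 p q m : nonneg_coeffs p -> nonneg_coeffs q ->
  ((p + q)@_m != 0) = (p@_m != 0) || (q@_m != 0).
Proof. by move=> p_ge0 q_ge0; rewrite mcoeffD paddr_eq0 // negb_and. Qed.

Lemma mcoeffMX_neq0 p e m :
  ((p * 'X_[e])@_m != 0) = (e <= m)%MM && (p@_(m - e) != 0).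
Proof. by rewrite mcoeffMX_if; case: ifP; rewrite ?eqxx. Qed.

End NonnegSupport.

Arguments nonneg_coeffs {n R} p.

Lemma forall_ord3 (P : 'I_3 -> Prop) : (forall i, P i) <-> [/\ P i0, P i1 & P i2].
Proof.
split=> [P_i|[P0 P1 P2] [[|[|[|i]]] lt_i3]] //.
- by rewrite (_ : Ordinal _ = i0) //; apply: val_inj.
- by rewrite (_ : Ordinal _ = i1) //; apply: val_inj.
- by rewrite (_ : Ordinal _ = i2) //; apply: val_inj.
Qed.

Lemma lem3E (e m : 'X_{1..3}) :
  (e <= m)%MM = [&& (e i0 <= m i0)%N, (e i1 <= m i1)%N & (e i2 <= m i2)%N].
Proof.
by apply/mnm_lepP/and3P => [/(forall_ord3 (fun i => e i <= m i)%N) []|le_em];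
  [split | apply/(forall_ord3 (fun i => e i <= m i)%N)].
Qed.

Lemma eqm3E (e m : 'X_{1..3}) :
  (e == m) = [&& e i0 == m i0, e i1 == m i1 & e i2 == m i2].
Proof.
apply/eqP/and3P => [-> //|[/eqP e0 /eqP e1 /eqP e2]].
by apply/mnmP/(forall_ord3 (fun i => e i = m i)).
Qed.

Definition mon3 (a b c : nat) : 'X_{1..3} :=
  (U_(i0) *+ a + U_(i1) *+ b + U_(i2) *+ c)%MM.

Lemma mon3E a b c : [/\ mon3 a b c i0 = a, mon3 a b c i1 = b & mon3 a b c i2 = c].
Proof. by rewrite !mnmDE !mulmnE !mnm1E /=; split; lia. Qed.

Implicit Types p q : Poly3.

Definition supported p (S : nat -> nat -> nat -> Prop) :=
  forall m, p@_m != 0 <-> S (m i0) (m i1) (m i2).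

Lemma supported_ext {p} {S T : nat -> nat -> nat -> Prop} :
  (forall a b c, T a b c <-> S a b c) -> supported p S -> supported p T.
Proof. by move=> eqTS p_S m; rewrite p_S eqTS. Qed.

Lemma supported0 : supported 0 (fun _ _ _ => False).
Proof. by move=> m; rewrite mcoeff0 eqxx. Qed.

Lemma supported1 : supported 1 (fun a b c => a = 0 /\ b = 0 /\ c = 0)%N.
Proof.
move=> m; rewrite mcoeff1 pnatr_eq0 eqb0 negbK eqm3E !mnm0E.
by split=> [/and3P[/eqP-> /eqP-> /eqP->] | [-> [-> ->]]].
Qed.

Lemma supportedD {p q S T} : nonneg_coeffs p -> nonneg_coeffs q ->
  supported p S -> supported q T ->
  supported (p + q) (fun a b c => S a b c \/ T a b c).
Proof.
move=> p_ge0 q_ge0 p_S q_T m.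
by rewrite mcoeffD_neq0 // -p_S -q_T; split=> [/orP|[]->]; rewrite ?orbT.
Qed.

Lemma supportedMX p S a b c : supported p S ->
  supported (p * 'X_[mon3 a b c])
    (fun x y z => a <= x /\ b <= y /\ c <= z /\ S (x - a) (y - b) (z - c))%N.
Proof.
move=> p_S m; have := p_S (m - mon3 a b c)%MM.
rewrite mcoeffMX_neq0 lem3E !mnmBE; have [-> -> ->] := mon3E a b c.
case: (p@__ != 0) => -[S_m mS].
by split=> [/andP[/and3P[l0 l1 l2] _]|[-> [-> [-> /mS]]]];
  [do !split=> //; apply: S_m|].
by rewrite andbF; split=> // -[_ [_ [_ /mS]]].
Qed.

Definition u : Poly3 := 'X_i0.
Definition v : Poly3 := 'X_i1.
Definition w : Poly3 := 'X_i2.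

Lemma mpolyX_mon3 a b c : 'X_[mon3 a b c] = u ^+ a * v ^+ b * w ^+ c.
Proof. by rewrite !mpolyXD -!mpolyXn. Qed.

Fixpoint markov_pq k : Poly3 * Poly3 :=
  if k is k'.+1 then
    let: (p, q) := markov_pq k' in
    ((u + v) ^+ 2 * (p + q) + u * w * p, v * w * (p + q))
  else (1, 0).

Definition markov_p k := (markov_pq k).1.
Definition markov_q k := (markov_pq k).2.

Lemma markov_p0 : markov_p 0 = 1. Proof. by []. Qed.

Lemma markov_q0 : markov_q 0 = 0. Proof. by []. Qed.

Lemma markov_p1 : markov_p 1 = (u + v) ^+ 2 + u * w.
Proof. by rewrite /markov_p /=; ring. Qed.

Lemma markov_pS k :
  markov_p k.+1 = (u + v) ^+ 2 * (markov_p k + markov_q k) + u * w * markov_p k.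
Proof. by rewrite /markov_p /markov_q /=; case: (markov_pq k). Qed.

Lemma markov_qS k : markov_q k.+1 = v * w * (markov_p k + markov_q k).
Proof. by rewrite /markov_p /markov_q /=; case: (markov_pq k). Qed.

Lemma markov_pS_monomials k (r := markov_p k + markov_q k) :
  markov_p k.+1 = r * 'X_[mon3 2 0 0] + r * 'X_[mon3 1 1 0] + r * 'X_[mon3 1 1 0]
                  + r * 'X_[mon3 0 2 0] + markov_p k * 'X_[mon3 1 0 1].
Proof. by rewrite markov_pS !mpolyX_mon3 /r; ring. Qed.

Lemma markov_qS_monomial k :
  markov_q k.+1 = (markov_p k + markov_q k) * 'X_[mon3 0 1 1].
Proof. by rewrite markov_qS !mpolyX_mon3; ring. Qed.

Section CassiniLinearRecurrence.
Variables (R : comPzRingType) (t d : R) (s : nat -> R).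
Hypothesis s_rec : forall k, s k.+2 = t * s k.+1 - d * s k.

Lemma cassini_linear_rec k :
  s k.+2 * s k - s k.+1 ^+ 2 = d ^+ k * (s 2 * s 0 - s 1 ^+ 2).
Proof.
elim: k => [|k IHk]; first by rewrite expr0 mul1r.
by rewrite [d ^+ k.+1]exprS -mulrA -IHk [s k.+3]s_rec [s k.+2]s_rec; ring.
Qed.
End CassiniLinearRecurrence.

Arguments cassini_linear_rec {R t d s}.

Lemma markov_p_rec k : markov_p k.+2 =
  ((u + v) ^+ 2 + u * w + v * w) * markov_p k.+1 - u * v * w ^+ 2 * markov_p k.
Proof. by rewrite [markov_p k.+2]markov_pS markov_qS [markov_p k.+1]markov_pS; ring. Qed.

Lemma markov_p_cassini k : markov_p k.+2 * markov_p k - markov_p k.+1 ^+ 2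
  = (u + v) ^+ 2 * (u * v * w ^+ 2) ^+ k * (v * w).
Proof.
rewrite (cassini_linear_rec markov_p_rec) !markov_pS markov_qS markov_p0 markov_q0.
ring.
Qed.

Definition p_region k a b c : Prop :=
  (a + b + c = 2 * k /\ (k < a + b \/ a = k /\ b = 0))%N.
Definition q_region k a b c : Prop :=
  (a + b + c = 2 * k /\ 0 < b /\ 0 < c /\ k <= a + b)%N.
Definition pq_region k a b c := p_region k a b c \/ q_region k a b c.

(* The two recursions below are stated in exactly the shape produced by
   [supportedMX] and [supportedD] on [markov_qS_monomial] and
   [markov_pS_monomials], hence the [- 0] and the repeated disjunct. *)
Lemma q_region_succ k a b c :
  q_region k.+1 a b c <->
  (0 <= a /\ 1 <= b /\ 1 <= c /\ pq_region k (a - 0) (b - 1) (c - 1))%N.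
Proof. rewrite /pq_region /p_region /q_region; lia. Qed.

Lemma p_region_succ k a b c :
  p_region k.+1 a b c <->
  (((((2 <= a /\ 0 <= b /\ 0 <= c /\ pq_region k (a - 2) (b - 0) (c - 0)) \/
    (1 <= a /\ 1 <= b /\ 0 <= c /\ pq_region k (a - 1) (b - 1) (c - 0))) \/
    (1 <= a /\ 1 <= b /\ 0 <= c /\ pq_region k (a - 1) (b - 1) (c - 0))) \/
    (0 <= a /\ 2 <= b /\ 0 <= c /\ pq_region k (a - 0) (b - 2) (c - 0))) \/
    (1 <= a /\ 0 <= b /\ 1 <= c /\ p_region k (a - 1) (b - 0) (c - 1)))%N.
Proof.
rewrite /pq_region /p_region /q_region; split=> [[sum_abc [lt_k_ab|[a_k b0]]]|].
- have [a_ge2|a_le1] := leqP 2 a; first by do 4 left; lia.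
  have [b_ge2|b_le1] := leqP 2 b; first by left; right; lia.
  by do 3 left; right; lia.
- by right; lia.
- by case=> [[[[]|]|]|] ?; lia.
Qed.

Lemma markov_pq_support k :
  [/\ nonneg_coeffs (markov_p k), nonneg_coeffs (markov_q k),
      supported (markov_p k) (p_region k) & supported (markov_q k) (q_region k)].
Proof.
elim: k => [|k [p_ge0 q_ge0 p_supp q_supp]].
  rewrite markov_p0 markov_q0.
  split; [by move=> m; rewrite mcoeff1 ler0n | by move=> m; rewrite mcoeff0 | |].
  - by apply: (supported_ext _ supported1) => a b c; rewrite /p_region; lia.
  - by apply: (supported_ext _ supported0) => a b c; rewrite /q_region; lia.
have r_ge0 : nonneg_coeffs (markov_p k + markov_q k) by exact: nonneg_coeffsD.
have r_supp : supported (markov_p k + markov_q k) (pq_region k) by exact: supportedD.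
rewrite markov_pS_monomials markov_qS_monomial.
split.
- by do ![apply: nonneg_coeffsD | apply: nonneg_coeffsMX].
- exact: nonneg_coeffsMX.
- apply: (supported_ext (p_region_succ k)).
  by do ![apply: supportedD | apply: supportedMX
         | apply: nonneg_coeffsD | apply: nonneg_coeffsMX].
- exact/(supported_ext (q_region_succ k))/supportedMX.
Qed.

Lemma mulmn2_inj : injective (fun m : 'X_{1..3} => (m *+ 2)%MM).
Proof.
by move=> m m' /mnmP eq_m2; apply/mnmP => i; have := eq_m2 i; rewrite !mulmnE; lia.
Qed.

Lemma subst_squaresX m : subst_squares 'X_[m] = 'X_[(m *+ 2)%MM].
Proof.
rewrite /subst_squares comp_mpolyX -mpolyXn mpolyXE_id -prodrXl.
by apply: eq_bigr => i _; rewrite tnth_mktuple -!exprM mulnC.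
Qed.

Lemma mcoeff_subst_squares p m : (subst_squares p)@_(m *+ 2)%MM = p@_m.
Proof.
rewrite {2}(mpolyE p) /subst_squares comp_mpolyEX !raddf_sum.
apply: eq_bigr => m' _; rewrite /= -/(subst_squares _) subst_squaresX.
by rewrite !mcoeffZ !mcoeffX (inj_eq mulmn2_inj).
Qed.

Definition sq_eval : {rmorphism Poly3 -> Frac3} :=
  @tofrac Poly3 \o comp_mpoly [tuple ('X_i : Poly3) ^+ 2 | i < 3].

Lemma sq_eval_inj : injective sq_eval.
Proof.
move=> p q /eqP; rewrite tofrac_eq => /eqP eq_pq; apply/mpolyP => m.
by rewrite -[p@_m]mcoeff_subst_squares -[q@_m]mcoeff_subst_squares /subst_squares eq_pq.
Qed.

Lemma sq_eval_u : sq_eval u = xF ^+ 2.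
Proof. by rewrite /= comp_mpolyXU -tnth_nth tnth_mktuple rmorphXn. Qed.

Lemma sq_eval_v : sq_eval v = yF ^+ 2.
Proof. by rewrite /= comp_mpolyXU -tnth_nth tnth_mktuple rmorphXn. Qed.

Lemma sq_eval_w : sq_eval w = zF ^+ 2.
Proof. by rewrite /= comp_mpolyXU -tnth_nth tnth_mktuple rmorphXn. Qed.

Lemma xyzF_neq0 : [/\ xF != 0, yF != 0 & zF != 0].
Proof.
suff X_neq0 i : ('X_i : Poly3) != 0 by rewrite !tofrac_eq0 !X_neq0.
by apply/eqP => /(congr1 (mcoeff U_(i))); rewrite mcoeffX mcoeff0 eqxx.
Qed.

Lemma sq_eval_markov_p_neq0 k : sq_eval (markov_p k) != 0.
Proof.
rewrite -(rmorph0 sq_eval) (inj_eq sq_eval_inj); apply/eqP => p_eq0.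
have [_ _ p_supp _] := markov_pq_support k.
suff /p_supp : p_region k (mon3 k 0 k i0) (mon3 k 0 k i1) (mon3 k 0 k i2).
  by rewrite p_eq0 mcoeff0 eqxx.
by have [-> -> ->] := mon3E k 0 k; rewrite /p_region; lia.
Qed.

Lemma sq_eval_markov_p1 :
  sq_eval (markov_p 1) = (xF ^+ 2 + yF ^+ 2) ^+ 2 + xF ^+ 2 * zF ^+ 2.
Proof.
by rewrite markov_p1 !(rmorphXn, rmorphM, rmorphD) sq_eval_u sq_eval_v sq_eval_w; ring.
Qed.

Lemma sq_eval_markov_p_cassini k :
  sq_eval (markov_p k.+2) * sq_eval (markov_p k) - sq_eval (markov_p k.+1) ^+ 2
  = (xF ^+ 2 + yF ^+ 2) ^+ 2 * ((xF * yF * zF ^+ 2) ^+ k) ^+ 2 * (yF ^+ 2 * zF ^+ 2).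
Proof.
rewrite -[sq_eval _ ^+ 2]rmorphXn -rmorphM -rmorphB markov_p_cassini.
rewrite !(rmorphXn, rmorphM, rmorphD) -exprM mulnC exprM.
have -> : sq_eval u * sq_eval v * sq_eval w ^+ 2 = (xF * yF * zF ^+ 2) ^+ 2.
  by rewrite sq_eval_u sq_eval_v sq_eval_w; ring.
by rewrite sq_eval_u sq_eval_v sq_eval_w; ring.
Qed.

(* The field identities are stated over an abstract field because [field]
   is impractically slow on the concrete field [Frac3]. *)
Lemma markov_base_field (F : fieldType) (x y z : F) :
  x != 0 -> y != 0 -> z != 0 ->
  (x ^+ 2 + ((x ^+ 2 + y ^+ 2) / z) ^+ 2) / y
    = x * ((x ^+ 2 + y ^+ 2) ^+ 2 + x ^+ 2 * z ^+ 2) / (x * y * z ^+ 2) ^+ 1.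
Proof. by move=> x_neq0 y_neq0 z_neq0; field; rewrite x_neq0 y_neq0 z_neq0. Qed.

Lemma markov_exchange_field (F : fieldType) (x y z h f0 f1 f2 : F)
    (g := x * y * z ^+ 2) :
  x != 0 -> y != 0 -> z != 0 -> h != 0 -> f0 != 0 ->
  f2 * f0 - f1 ^+ 2 = (x ^+ 2 + y ^+ 2) ^+ 2 * h ^+ 2 * (y ^+ 2 * z ^+ 2) ->
  (((x ^+ 2 + y ^+ 2) / z) ^+ 2 + (x * f1 / (g * h)) ^+ 2) / (x * f0 / h)
    = x * f2 / (g * (g * h)).
Proof.
move=> x_neq0 y_neq0 z_neq0 h_neq0 f0_neq0 /eqP; rewrite subr_eq => /eqP f2f0.
rewrite -[f2](mulfK f0_neq0) f2f0 /g; field.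
by rewrite x_neq0 y_neq0 z_neq0 h_neq0 f0_neq0.
Qed.

Lemma markov_kSkE {M} : markov_family M ->
  forall k, M k k.+1 = xF * sq_eval (markov_p k) / (xF * yF * zF ^+ 2) ^+ k.
Proof.
case=> M10 M01 M11 M_rec; have [x_neq0 y_neq0 z_neq0] := xyzF_neq0.
have g_neq0 : xF * yF * zF ^+ 2 != 0.
  exact: mulf_neq0 (mulf_neq0 x_neq0 y_neq0) (expf_neq0 _ z_neq0).
suff M_pair k : M k k.+1 = xF * sq_eval (markov_p k) / (xF * yF * zF ^+ 2) ^+ k /\
    M k.+1 k.+2 = xF * sq_eval (markov_p k.+1) / (xF * yF * zF ^+ 2) ^+ k.+1.
  by move=> k; case: (M_pair k).
elim: k => [|k [IHk IHk1]].
  split; first by rewrite M01 markov_p0 rmorph1 expr0 divr1 mulr1.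
  have M12 : M 1 2 = (M 0 1 ^+ 2 + M 1 1 ^+ 2) / M 1 0 := M_rec 1 0 0 1 isT isT isT isT.
  rewrite M12 M01 M11 M10 sq_eval_markov_p1.
  exact: markov_base_field x_neq0 y_neq0 z_neq0.
split=> //.
have kk1_markov : in_markov_set k k.+1.
  by rewrite /in_markov_set ltn0Sn leqnSn coprimenS.
have kk1_11_nbrs : farey_nbrs k k.+1 1 1.
  by rewrite /farey_nbrs; apply/orP; right; apply/eqP; lia.
have := M_rec k k.+1 1 1 kk1_markov isT kk1_11_nbrs.
rewrite muln1 !addnS !addn0 => ->; last by [].
rewrite IHk IHk1 M11 [_ ^+ k.+2]exprS [_ ^+ k.+1]exprS.
apply: markov_exchange_field.
- exact: x_neq0.
- exact: y_neq0.
- exact: z_neq0.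
- exact: expf_neq0.
- exact: sq_eval_markov_p_neq0.
- exact: sq_eval_markov_p_cassini.
Qed.

Lemma p_region_ratE k a b c : (0 < k)%N ->
  p_region k a b c <->
  [/\ c = (2 * k - a - b)%N, 1 <= a%:Q / k%:Q + b%:Q / k.+1%:Q & (a + b <= 2 * k)%N].
Proof.
move=> k_gt0; rewrite -!pmulrn.
have k_neq0 : k%:R != 0 :> rat by rewrite pnatr_eq0 -lt0n.
have -> : a%:R / k%:R + b%:R / k.+1%:R = (k.+1 * a + k * b)%N%:R / (k * k.+1)%N%:R :> rat.
  by rewrite natrD !natrM; field; rewrite k_neq0 nat1r pnatr_eq0.
rewrite ler_pdivlMr ?ltr0n ?muln_gt0 ?k_gt0 // mul1r ler_nat /p_region.
split=> [[sum_abc [lt_k_ab|[a_k b0]]]|[-> le_kk1 le_ab_2k]].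
- have : (k * k.+1 <= k * (a + b))%N by rewrite leq_mul2l lt_k_ab orbT.
  by split; nia.
- by split; nia.
- split; first by lia.
  have [lt_k_ab|le_ab_k] := ltnP k (a + b); [by left | right].
  have : (k * (a + b) <= k * k)%N by rewrite leq_mul2l le_ab_k orbT.
  nia.
Qed.

Lemma mulf_div_cancel {F : fieldType} {a b x d : F} :
  x != 0 -> d != 0 -> a / d = x * b / (x * d) -> a = b.
Proof. by move=> x_neq0 d_neq0; rewrite -mulf_div divff // mul1r => /divIf; apply. Qed.

Theorem corollary5p4 (M : nat -> nat -> Frac3) (k : nat) (P : Poly3) :
  markov_family M ->
  (1 <= k)%N ->
  P \is (2 * k)%N.-homog ->
  M k k.+1 = tofrac (subst_squares P)
             / (xF ^+ (k - 1) * yF ^+ k * zF ^+ (2 * k)) ->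
  forall m : 'X_{1..3},
    (P@_m != 0) <->
    [/\ m i2 = (2 * k - m i0 - m i1)%N,
        1 <= (m i0)%:Q / k%:Q + (m i1)%:Q / k.+1%:Q &
        (m i0 + m i1 <= 2 * k)%N].
Proof.
(* Homogeneity of [P] follows from [P = markov_p k]. *)
move=> M_markov k_gt0 _ M_P m.
have [x_neq0 y_neq0 z_neq0] := xyzF_neq0.
set D := _ * _ * _ in M_P.
have D_neq0 : D != 0.
  exact: mulf_neq0 (mulf_neq0 (expf_neq0 _ x_neq0) (expf_neq0 _ y_neq0))
                   (expf_neq0 _ z_neq0).
have gk_xD : (xF * yF * zF ^+ 2) ^+ k = xF * D.
  by rewrite /D [(2 * k)%N]mulnC exprM subn1 !mulrA -exprS prednK // -!exprMn.
have P_markov : P = markov_p k.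
  have := markov_kSkE M_markov k; rewrite gk_xD M_P => /(mulf_div_cancel x_neq0 D_neq0).
  exact: sq_eval_inj.
have [_ _ p_supp _] := markov_pq_support k.
by rewrite P_markov p_supp p_region_ratE.
Qed.
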